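(* Let $X$ be a complex Banach space. Suppose that for every normalized weakly null sequence $(y_n)$ in $X$ there exist a subsequence $(y_{n_k})$ and a sequence $(f_k)$ in $X^*$ biorthogonal to it (i.e. $f_k(y_{n_j})=\delta_{kj}$) such that $(f_k)$ has an (unconditional) spreading model satisfying an upper $p$-estimate for some $p>1$. Then $X$ is $\mathcal{P}$-Schur. If moreover the same $p>1$ works for every such sequence and $N>p'=p/(p-1)$ is an integer, then $X$ is $\mathcal{P}_N$-Schur.
   Context: An $N$-homogeneous analytic polynomial on $X$ is the restriction to the diagonal of a bounded $N$-linear form on $X^N$; $\mathcal{P}_N(X)$ denotes the space of these. $X$ is $\mathcal{P}_N$-Schur if $P(x_n)\to0$ for all $P\in\mathcal{P}_N(X)$ implies $\|x_n\|\to0$; $X$ is $\mathcal{P}$-Schur if $P(x_n)\to 0$ for all $P\in\mathcal{P}_M(X)$ and all $M\ge1$ implies $\|x_n\|\to0$. A sequence $(f_k)$ in a Banach space has a spreading model given by a norm $L$ on the space of finitely supported scalar sequences if for every $\varepsilon>0$ and every finitely supported $a=(a_1,\dots,a_M)$ there is $k$ such that $\left|\,\|\sum_{i=1}^M a_i f_{k_i}\|-L(a)\right|<\varepsilon$ for all $k<k_1<\cdots<k_M$; the spreading model is the completion $F$ of this space under $L$, with unit vectors $e_i$. It is unconditional if $(e_i)$ is an unconditional basis of $F$, and satisfies an upper $p$-estimate if there is $C$ with $L(a)\le C(\sum_i|a_i|^p)^{1/p}$ for all finitely supported $a$. *)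

From HB Require Import structures.
From mathcomp Require Import all_boot all_order all_algebra.
From mathcomp Require Import all_classical all_reals all_analysis.
From mathcomp Require Import complex.
Set Implicit Arguments. Unset Strict Implicit. Unset Printing Implicit Defensive.
Import Order.TTheory GRing.Theory Num.Theory.
Import numFieldNormedType.Exports.
Local Open Scope ring_scope.
Local Open Scope classical_set_scope.
Local Open Scope complex_scope.

Section Defs.
Variable R : realType.
Notation C := (R[i]).
Variable V : completeNormedModType C.

Definition rnorm (x : V) : R := complex.Re `|x|.
Definition cabs (z : C) : R := complex.Re `|z|.

Definition is_dual (g : V -> C) : Prop :=
  (forall (a : C) (x y : V), g (a *: x + y) = a * g x + g y) /\
  (exists M : R, forall x, cabs (g x) <= M * rnorm x).

Definition dnorm (g : V -> C) : R :=
  sup [set cabs (g x) | x in [set x : V | rnorm x <= 1]].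

Definition weakly_null (y : nat -> V) : Prop :=
  forall g, is_dual g -> (fun n => cabs (g (y n))) @ \oo --> (0 : R).

Definition normalized (y : nat -> V) : Prop := forall n, rnorm (y n) = 1.

Definition upd N (x : 'I_N -> V) (i : 'I_N) (v : V) : 'I_N -> V :=
  fun j => if j == i then v else x j.

Definition is_bdd_multilinear N (A : ('I_N -> V) -> C) : Prop :=
  (forall (x : 'I_N -> V) (i : 'I_N) (a : C) (v w : V),
      A (upd x i (a *: v + w)) = a * A (upd x i v) + A (upd x i w)) /\
  (exists M : R, forall x, cabs (A x) <= M * \prod_(i < N) rnorm (x i)).

Definition is_hom_poly N (P : V -> C) : Prop :=
  exists A : ('I_N -> V) -> C, is_bdd_multilinear A /\
    forall x, P x = A (fun _ => x).

Definition PN_Schur N : Prop :=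
  forall x : nat -> V,
    (forall P, is_hom_poly N P -> (fun n => cabs (P (x n))) @ \oo --> (0 : R)) ->
    (fun n => rnorm (x n)) @ \oo --> (0 : R).

Definition P_Schur : Prop :=
  forall x : nat -> V,
    (forall M P, (1 <= M)%N -> is_hom_poly M P -> (fun n => cabs (P (x n))) @ \oo --> (0 : R)) ->
    (fun n => rnorm (x n)) @ \oo --> (0 : R).

Definition fin_supp (a : nat -> C) : Prop := exists M, forall i, (M <= i)%N -> a i = 0.

Definition is_fs_norm (L : (nat -> C) -> R) : Prop :=
  (forall a, fin_supp a -> 0 <= L a) /\
  (forall a, fin_supp a -> L a = 0 -> forall i, a i = 0) /\
  (forall (c : C) a, fin_supp a -> L (fun i => c * a i) = cabs c * L a) /\
  (forall a b, fin_supp a -> fin_supp b -> L (fun i => a i + b i) <= L a + L b).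

Definition spreading_model (f : nat -> V -> C) (L : (nat -> C) -> R) : Prop :=
  is_fs_norm L /\
  forall (M : nat) (a : nat -> C), (forall i, (M <= i)%N -> a i = 0) ->
  forall eps : R, 0 < eps -> exists k : nat,
    forall kk : nat -> nat, (k < kk 0)%N -> (forall i, (i.+1 < M)%N -> (kk i < kk i.+1)%N) ->
      `| dnorm (fun x => \sum_(i < M) a i * f (kk i) x) - L a | < eps.

(* the unit vectors (e_i) form an unconditional basis of the completion F *)
Definition sm_unconditional (L : (nat -> C) -> R) : Prop :=
  exists K : R, forall (a : nat -> C) (s : nat -> bool), fin_supp a ->
    L (fun i => (if s i then -1 else 1) * a i) <= K * L a.

Definition sm_upper_est (L : (nat -> C) -> R) (p : R) : Prop :=
  exists K : R, forall (M : nat) (a : nat -> C), (forall i, (M <= i)%N -> a i = 0) ->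
    L a <= K * powR (\sum_(i < M) powR (cabs (a i)) p) p^-1.

Definition good_dual_seq (y : nat -> V) (p : R) : Prop :=
  exists nk : nat -> nat, (forall k, (nk k < nk k.+1)%N) /\
  exists f : nat -> V -> C, (forall k, is_dual (f k)) /\
    (forall k j, f k (y (nk j)) = (k == j)%:R) /\
    exists L, spreading_model f L /\ sm_unconditional L /\ sm_upper_est L p.

End Defs.

(* From the biorthogonal functionals (f_k) of a normalized weakly null sequence
   (y_n) one builds the N-homogeneous polynomial P(x) = sum_j f_{phi j}(x)^N,
   which equals c^N at c y_{n_{phi j}}.  The series
   converges boundedly on the unit ball: the spreading model with an upper
   p-estimate bounds sum_{i<m} |f_{k_i}(u)| by D m^(1/p) for blocks far enough
   out, a diagonal subsequence phi makes this hold on every Schreier-admissible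
   set of indices, so #{j | |f_{phi j}(u)| > t} <= 2 (D/t)^(p'), and a dyadic
   decomposition sums the N-th powers when N > p'.  If ||x_n|| does not tend to
   0 for a weakly null (x_n), a normalized subsequence y gives such a P with
   |P(x_{n_j})| = ||x_{n_j}||^N bounded below. *)

From HB Require Import structures.
From mathcomp Require Import all_boot all_order all_algebra.
From mathcomp Require Import all_classical all_reals all_analysis.
From mathcomp Require Import complex.
From mathcomp Require Import ring lra zify.
Set Implicit Arguments. Unset Strict Implicit. Unset Printing Implicit Defensive.
Import Order.TTheory GRing.Theory Num.Theory.
Import numFieldNormedType.Exports.
Local Open Scope ring_scope.
Local Open Scope complex_scope.
Local Open Scope classical_set_scope.

Section ComplexModulus.
Variable R : realType.
Local Notation C := R[i].

Lemma normc_cabs (z : C) : `|z| = (cabs z)%:C.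
Proof. by rewrite /cabs normc_def. Qed.

Lemma cabsE (z : C) : cabs z = Num.sqrt (complex.Re z ^+ 2 + complex.Im z ^+ 2).
Proof. by rewrite /cabs normc_def. Qed.

Lemma cabs_ge0 (z : C) : 0 <= cabs z.
Proof. by rewrite -lecR -normc_cabs normr_ge0. Qed.

Lemma cabsM (z w : C) : cabs (z * w) = cabs z * cabs w.
Proof. by apply: complexI; rewrite rmorphM /= -!normc_cabs normrM. Qed.

Lemma cabsD (z w : C) : cabs (z + w) <= cabs z + cabs w.
Proof. by rewrite -lecR rmorphD /= -!normc_cabs ler_normD. Qed.

Lemma cabs0 : cabs (0 : C) = 0.
Proof. by apply: complexI; rewrite -normc_cabs normr0. Qed.

Lemma cabs_sign (b : bool) : cabs ((-1) ^+ b : C) = 1.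
Proof. by apply: complexI; rewrite -normc_cabs normrX normrN1 expr1n. Qed.

Lemma cabsR (a : R) : cabs a%:C = `|a|.
Proof. by rewrite cabsE /= expr0n addr0 sqrtr_sqr. Qed.

Lemma cabsX (z : C) n : cabs (z ^+ n) = cabs z ^+ n.
Proof. by apply: complexI; rewrite rmorphXn /= -!normc_cabs normrX. Qed.

Lemma ler_Re_cabs (z : C) : `|complex.Re z| <= cabs z.
Proof. by rewrite -lecR -normc_cabs normc_ge_Re. Qed.

Lemma ler_Im_cabs (z : C) : `|complex.Im z| <= cabs z.
Proof.
by rewrite cabsE -sqrtr_sqr ler_sqrt ?addr_ge0 ?sqr_ge0 // lerDr sqr_ge0.
Qed.

Lemma cabs_le_ReIm (z : C) : cabs z <= `|complex.Re z| + `|complex.Im z|.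
Proof.
have h : 0 <= `|complex.Re z| + `|complex.Im z| by rewrite addr_ge0.
rewrite cabsE -(ger0_norm h) -sqrtr_sqr ler_sqrt ?sqr_ge0 //.
rewrite sqrrD !real_normK ?num_real // lerD2r lerDl.
by rewrite mulrn_wge0 // mulr_ge0.
Qed.

Lemma ler_cabs_sum (I : Type) (r : seq I) (P : pred I) (F : I -> C) :
  cabs (\sum_(i <- r | P i) F i) <= \sum_(i <- r | P i) cabs (F i).
Proof.
elim/big_rec2: _ => [|i y z _ Hy]; first by rewrite cabs0.
by apply: le_trans (cabsD _ _) _; rewrite lerD2l.
Qed.

Lemma cabs_prod (I : Type) (r : seq I) (P : pred I) (F : I -> C) :
  cabs (\prod_(i <- r | P i) F i) = \prod_(i <- r | P i) cabs (F i).
Proof.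
apply: complexI; rewrite rmorph_prod /= -normc_cabs normr_prod.
by apply: eq_bigr => i _; rewrite normc_cabs.
Qed.

Lemma Re_sum (I : Type) (r : seq I) (F : I -> C) :
  complex.Re (\sum_(i <- r) F i) = \sum_(i <- r) complex.Re (F i).
Proof. by elim/big_rec2: _ => // i y z _ <-; case: (F i); case: z. Qed.

Lemma Im_sum (I : Type) (r : seq I) (F : I -> C) :
  complex.Im (\sum_(i <- r) F i) = \sum_(i <- r) complex.Im (F i).
Proof. by elim/big_rec2: _ => // i y z _ <-; case: (F i); case: z. Qed.

End ComplexModulus.

Section NormAndDual.
Variable R : realType.
Local Notation C := R[i].
Variable V : completeNormedModType C.

Lemma normv_rnorm (x : V) : `|x| = (rnorm x)%:C.
Proof. by rewrite /rnorm RRe_real ?normr_real. Qed.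

Lemma rnorm_ge0 (x : V) : 0 <= rnorm x.
Proof. by rewrite -lecR -normv_rnorm normr_ge0. Qed.

Lemma rnormZ (a : C) (x : V) : rnorm (a *: x) = cabs a * rnorm x.
Proof. by apply: complexI; rewrite rmorphM /= -!normv_rnorm -normc_cabs normrZ. Qed.

Lemma rnorm0 : rnorm (0 : V) = 0.
Proof. by apply: complexI; rewrite -normv_rnorm normr0. Qed.

Lemma rnorm_eq0 (x : V) : rnorm x = 0 -> x = 0.
Proof. by move=> h; apply/normr0_eq0; rewrite normv_rnorm h. Qed.

Lemma rnorm_normalize (x : V) : 0 < rnorm x -> rnorm ((rnorm x)^-1%:C *: x) = 1.
Proof. by move=> x0; rewrite rnormZ cabsR gtr0_norm ?invr_gt0 // mulVf ?gt_eqF. Qed.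

Lemma normalizeK (x : V) : 0 < rnorm x -> (rnorm x)%:C *: ((rnorm x)^-1%:C *: x) = x.
Proof. by move=> x0; rewrite scalerA -rmorphM /= divff ?gt_eqF // scale1r. Qed.

Section Dual.
Variable g : V -> C.
Hypothesis g_dual : is_dual g.

Lemma dual0 : g 0 = 0.
Proof.
have := g_dual.1 1 0 0; rewrite scaler0 addr0 mul1r => /esym/eqP.
by rewrite -subr_eq0 addrK => /eqP.
Qed.

Lemma dualZ a x : g (a *: x) = a * g x.
Proof. by have := g_dual.1 a x 0; rewrite !addr0 dual0 addr0. Qed.

Lemma dualD x y : g (x + y) = g x + g y.
Proof. by have := g_dual.1 1 x y; rewrite scale1r mul1r. Qed.

Lemma dual_bounded : exists M : R, 0 <= M /\ forall x, cabs (g x) <= M * rnorm x.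
Proof.
have [M hM] := g_dual.2; exists `|M|; split => // x.
by apply: le_trans (hM x) _; rewrite ler_wpM2r ?rnorm_ge0 ?ler_norm.
Qed.

Lemma dual_le_dnorm x : rnorm x <= 1 -> cabs (g x) <= dnorm g.
Proof.
move=> x1; have [M [M0 hM]] := dual_bounded.
apply: sup_upper_bound; last by exists x.
split; first by exists (cabs (g 0)), 0 => //=; rewrite rnorm0 ler01.
exists M => _ [y y1 <-]; apply: le_trans (hM y) _.
by rewrite -[leRHS]mulr1 ler_wpM2l.
Qed.

End Dual.

Lemma is_dual_sum (I : Type) (r : seq I) (a : I -> C) (F : I -> V -> C) :
  (forall i, is_dual (F i)) -> is_dual (fun x => \sum_(i <- r) a i * F i x).
Proof.
move=> Fd; split.
  move=> c x y; rewrite mulr_sumr -big_split /=; apply: eq_bigr => i _.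
  by rewrite (dualD (Fd i)) (dualZ (Fd i)); ring.
elim: r => [|i r [M hM]]; first by exists 0 => x; rewrite big_nil cabs0 mul0r.
have [M' [_ hM']] := dual_bounded (Fd i).
exists (cabs (a i) * M' + M) => x; rewrite big_cons mulrDl.
apply: le_trans (cabsD _ _) (lerD _ (hM x)).
by rewrite cabsM -mulrA ler_wpM2l ?cabs_ge0.
Qed.

End NormAndDual.

Section ComplexSeries.
Variable R : realType.
Local Notation C := R[i].

Lemma cvgn_partial_sum_of_abs (u : nat -> R) (B : R) :
  (forall n, \sum_(j < n) `|u j| <= B) -> cvgn (fun n => \sum_(j < n) u j).
Proof.
move=> uB; have <- : series u = (fun n => \sum_(j < n) u j) by rewrite seriesEord.
apply: normed_cvg.
apply: nondecreasing_is_cvgn.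
  by apply/nondecreasing_seqP => n /=; rewrite seriesEord /= big_ord_recr lerDl.
by exists B => _ [n _ <-] /=; rewrite seriesEord /=; exact: uB.
Qed.

Definition Re_partial (t : nat -> C) n := \sum_(j < n) complex.Re (t j).
Definition Im_partial (t : nat -> C) n := \sum_(j < n) complex.Im (t j).

(* Computed componentwise: [R[i]] is not equipped with a complete normed
   structure, so [normed_cvg] is only available for the real and imaginary parts. *)
Definition csum (t : nat -> C) : C := limn (Re_partial t) +i* limn (Im_partial t).

Variables (t : nat -> C) (B : R).
Hypothesis tB : forall n, \sum_(j < n) cabs (t j) <= B.

Lemma cvgn_Re_partial : cvgn (Re_partial t).
Proof.
apply: (@cvgn_partial_sum_of_abs (fun j => complex.Re (t j)) B) => n.
by apply: le_trans (tB n); apply: ler_sum => j _; exact: ler_Re_cabs.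
Qed.

Lemma cvgn_Im_partial : cvgn (Im_partial t).
Proof.
apply: (@cvgn_partial_sum_of_abs (fun j => complex.Im (t j)) B) => n.
by apply: le_trans (tB n); apply: ler_sum => j _; exact: ler_Im_cabs.
Qed.

Lemma csum_le : cabs (csum t) <= B.
Proof.
have B0 : 0 <= B by apply: le_trans (tB 0%N); rewrite big_ord0.
set r := Re_partial t; set i := Im_partial t.
have sq_cvg : (r \* r + i \* i) @ \oo --> limn r * limn r + limn i * limn i.
  have [rc ic] := (cvgn_Re_partial, cvgn_Im_partial).
  by apply: cvgD; apply: cvgM.
have : limn (r \* r + i \* i) <= B ^+ 2.
  apply: limr_le; first by apply/cvg_ex; eexists; exact: sq_cvg.
  apply: nearW => n; change (r n * r n + i n * i n <= B ^+ 2); rewrite -!expr2.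
  have := le_trans (ler_cabs_sum _ _ _) (tB n).
  rewrite cabsE Re_sum Im_sum -/(r n) -/(i n) => h.
  rewrite -[leLHS]sqr_sqrtr ?addr_ge0 ?sqr_ge0 //.
  by rewrite lerXn2r ?nnegrE ?sqrtr_ge0.
rewrite (cvg_lim (@norm_hausdorff _ _) sq_cvg) => h.
by rewrite cabsE -(ger0_norm B0) -sqrtr_sqr ler_sqrt ?sqr_ge0 // !expr2.
Qed.

End ComplexSeries.

Lemma csum_linear (R : realType) (a : R[i]) (t1 t2 : nat -> R[i]) (B1 B2 : R) :
  (forall n, \sum_(j < n) cabs (t1 j) <= B1) ->
  (forall n, \sum_(j < n) cabs (t2 j) <= B2) ->
  csum (fun j => a * t1 j + t2 j) = a * csum t1 + csum t2.
Proof.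
move=> t1B t2B; rewrite /csum.
have [r1 i1] := (cvgn_Re_partial t1B, cvgn_Im_partial t1B).
have [r2 i2] := (cvgn_Re_partial t2B, cvgn_Im_partial t2B).
have -> : Re_partial (fun j => a * t1 j + t2 j) = fun n =>
    complex.Re a * Re_partial t1 n - complex.Im a * Im_partial t1 n + Re_partial t2 n.
  apply: funext => n; rewrite /Re_partial /Im_partial !mulr_sumr -sumrB -big_split /=.
  by apply: eq_bigr => j _; case: a => ? ?; case: (t1 j) => ? ?; case: (t2 j).
have -> : Im_partial (fun j => a * t1 j + t2 j) = fun n =>
    complex.Re a * Im_partial t1 n + complex.Im a * Re_partial t1 n + Im_partial t2 n.
  apply: funext => n; rewrite /Re_partial /Im_partial !mulr_sumr -!big_split /=.
  by apply: eq_bigr => j _; case: a => ? ?; case: (t1 j) => ? ?; case: (t2 j) => ? ? /=; ring.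
have cM c (f : nat -> R) : cvgn f -> (fun n => c * f n) @ \oo --> c * limn f.
  exact: cvgMr.
rewrite !(cvg_lim (@norm_hausdorff _ _) (cvgD (cvgB (cM _ _ r1) (cM _ _ i1)) r2)).
rewrite !(cvg_lim (@norm_hausdorff _ _) (cvgD (cvgD (cM _ _ i1) (cM _ _ r1)) i2)).
by case: a => ar ai; apply/eqP; rewrite eq_complex /= !eqxx.
Qed.

Lemma csum_delta (R : realType) (t : nat -> R[i]) (j0 : nat) :
  (forall j, j != j0 -> t j = 0) -> csum t = t j0.
Proof.
move=> t0; suff sE : \forall n \near \oo, \sum_(j < n) t j = t j0.
  rewrite /csum (norm_lim_near_cst (l := complex.Re (t j0))).
    rewrite (norm_lim_near_cst (l := complex.Im (t j0))); first by case: (t j0).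
    by apply: filterS sE => n <-; rewrite /Im_partial Im_sum.
  by apply: filterS sE => n <-; rewrite /Re_partial Re_sum.
exists j0.+1 => // n /= n_gt; rewrite (bigD1 (Ordinal n_gt)) //= big1 ?addr0 // => j.
by rewrite -val_eqE => /t0.
Qed.

Section DyadicLayers.
Variable R : realType.

Lemma powR_exprn (x q : R) (k : nat) : 0 <= x -> powR (x ^+ k) q = powR x q ^+ k.
Proof.
move=> x0; rewrite -powR_mulrn // -powRrM mulrC powRrM powR_mulrn //.
exact: powR_ge0.
Qed.

Lemma sum_nat_of_bool (P : pred nat) n :
  \sum_(j < n) (P j)%:R = (count P (iota 0 n))%:R :> R.
Proof.
rewrite -natr_sum -sum1_count -(big_mkord xpredT (fun j => nat_of_bool (P j))).
rewrite /index_iota subn0 [in RHS]big_mkcond.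
by congr _%:R; apply: eq_bigr => j _; case: (P j).
Qed.

Lemma exprn_le_dyadic_layers (D x : R) (N L : nat) : 0 <= x <= D ->
  x ^+ N <= \sum_(l < L) (D / 2 ^+ l.+1 < x)%R%:R * (D / 2 ^+ l) ^+ N
            + (x <= D / 2 ^+ L)%R%:R * x ^+ N.
Proof.
case/andP=> x0 xD; elim: L => [|L IH]; first by rewrite big_ord0 add0r expr0 divr1 xD mul1r.
apply: le_trans IH _; rewrite big_ord_recr /= -addrA lerD2l.
have D0 : 0 <= D := le_trans x0 xD.
have [xL|xL] := leP x (D / 2 ^+ L); last first.
  by rewrite mul0r addr_ge0 ?mulr_ge0 ?exprn_ge0 ?divr_ge0.
have [xL1|xL1] := leP x (D / 2 ^+ L.+1); first by rewrite mul0r add0r.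
by rewrite !mul1r mul0r addr0 lerXn2r ?nnegrE ?divr_ge0 ?exprn_ge0.
Qed.

Lemma sum_pow_le_of_count_gt (x : nat -> R) (A D q : R) (N : nat) :
  (0 < N)%N -> 0 <= A -> 0 < D -> q < N%:R -> (forall j, 0 <= x j <= D) ->
  (forall t n, 0 < t -> \sum_(j < n) (t < x j)%R%:R <= A * powR (D / t) q) ->
  forall n, \sum_(j < n) x j ^+ N <=
    A * D ^+ N * powR 2 q / (1 - powR 2 q / 2 ^+ N) + 1.
Proof.
move=> N0 A0 D0 qN x0D xcount n.
set w := powR 2 q; set r := w / 2 ^+ N.
have w0 : 0 < w by rewrite powR_gt0.
have r0 : 0 < r by rewrite divr_gt0 ?exprn_gt0.
have r1 : r < 1.
  rewrite ltr_pdivrMr ?exprn_gt0 // mul1r -powR_mulrn // /w /powR.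
  by rewrite pnatr_eq0 /= ltr_expR ltr_pM2r ?ln_gt0 ?ltr1n.
have [L nL] : exists L, n%:R * D ^+ N <= 2 ^+ L.
  exists (Num.trunc (n%:R * D ^+ N)).+1; apply: le_trans (ltW (truncnS_gt _)) _.
  by rewrite -natrX ler_nat ltnW // ltn_expl.
apply: le_trans.
  by apply: ler_sum => j _; exact: (exprn_le_dyadic_layers N L (x0D j)).
(* Level l has at most A (2^(l+1))^q terms, each contributing (D/2^l)^N, i.e.
   A D^N w r^l in total: a geometric series since r < 1 exactly when q < N. *)
rewrite big_split /= lerD //.
  rewrite exchange_big /=; apply: le_trans (geometric_le_lim L _ r0 _); last 2 first.
  - by rewrite !mulr_ge0 ?exprn_ge0 ?(ltW D0) ?(ltW w0).
  - by rewrite gtr0_norm.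
  rewrite seriesEord /=; apply: ler_sum => l _; rewrite -mulr_suml.
  apply: le_trans (ler_wpM2r _ (xcount _ n _)) _.
  - by rewrite exprn_ge0 // divr_ge0 ?exprn_ge0 ?ltW.
  - by rewrite divr_gt0 ?exprn_gt0.
  rewrite invf_div mulrCA divff ?gt_eqF // mulr1 powR_exprn // -/w.
  suff -> : A * w ^+ l.+1 * (D / 2 ^+ l) ^+ N = A * D ^+ N * w * r ^+ l by [].
  by rewrite /r !expr_div_n -!exprM mulnC exprS; ring.
apply: (@le_trans _ _ (\sum_(j < n) (D / 2 ^+ L) ^+ N)).
  apply: ler_sum => j _; have /andP[xj0 _] := x0D j.
  have [xL|_] := boolP (x j <= D / 2 ^+ L).
    by rewrite mul1r lerXn2r ?nnegrE ?divr_ge0 ?exprn_ge0 ?(ltW D0).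
  by rewrite mul0r exprn_ge0 ?divr_ge0 ?exprn_ge0 ?(ltW D0).
rewrite sumr_const card_ord -[_ *+ n]mulr_natl expr_div_n -exprM mulrA.
rewrite ler_pdivrMr ?exprn_gt0 // mul1r (le_trans nL) //.
by rewrite ler_eXn2l ?ltr1n // leq_pmulr.
Qed.

End DyadicLayers.

Definition schreier_admissible (s : seq nat) : bool :=
  sorted ltn s && all (fun j => size s <= (2 * j).+2)%N s.

Section SchreierCounting.
Variable R : realType.

Lemma le_powR_conj_of_mul_le (p m t D : R) : 1 < p -> 1 <= m -> 0 < t ->
  m * t <= D * powR m p^-1 -> m <= powR (D / t) (p / (p - 1)).
Proof.
move=> p1 m1 t0 mtD.
have m0 : 0 < m := lt_le_trans ltr01 m1.
have p0 : 0 < p := lt_trans ltr01 p1.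
have mE : m = powR m p^-1 * powR m (1 - p^-1).
  rewrite -powRD; last by rewrite (gt_eqF m0) implybT.
  by rewrite addrC subrK powRr1 ?(ltW m0).
have m_le : powR m (1 - p^-1) <= D / t.
  rewrite ler_pdivlMr // -(ler_pM2l (powR_gt0 p^-1 m0)) mulrA -mE.
  by rewrite [_ * D]mulrC.
have e : (1 - p^-1) * (p / (p - 1)) = 1.
  by field; rewrite !gt_eqF ?subr_gt0.
rewrite -[leLHS](powRr1 (ltW m0)) -[X in _ `^ X <= _]e [in leLHS]powRrM.
apply: ge0_ler_powR; rewrite ?nnegrE ?powR_ge0 //.
- by rewrite divr_ge0 ?subr_ge0 ?ltW.
- exact: le_trans (powR_ge0 _ _) m_le.
Qed.

Lemma sum_gt_le_of_schreier (x : nat -> R) (p D t : R) n : 1 < p -> 0 < t ->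
  (forall s, schreier_admissible s -> \sum_(j <- s) x j <= D * powR (size s)%:R p^-1) ->
  \sum_(j < n) (t < x j)%R%:R <= 2 * powR (D / t) (p / (p - 1)).
Proof.
move=> p1 t0 xs; rewrite (sum_nat_of_bool R (fun j => t < x j)).
set P := fun j => t < x j; set g := count P (iota 0 n); set c := (g %/ 2)%N.
have cn : (c <= n)%N.
  by rewrite (leq_trans (leq_div _ _)) // (leq_trans (count_size _ _)) ?size_iota.
(* Dropping the indices below g/2 keeps at least half of the g large terms and
   makes the remaining index set Schreier-admissible. *)
set s := [seq j <- iota c (n - c) | P j].
have gE : g = (count P (iota 0 c) + size s)%N.
  by rewrite /g -(subnKC cn) iotaD count_cat size_filter.
have g_le : (g <= c + size s)%N.
  by rewrite gE leq_add2r (leq_trans (count_size _ _)) ?size_iota.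
have s_adm : schreier_admissible s.
  rewrite /schreier_admissible sorted_filter ?iota_ltn_sorted //=; last exact: ltn_trans.
  apply/allP => j; rewrite mem_filter mem_iota => /andP[_ /andP[cj _]].
  by move: gE cj; rewrite /c; lia.
have st : (size s)%:R * t <= \sum_(j <- s) x j.
  rewrite (big_nth 0) big_mkord [_ * t]mulr_natl.
  have -> : t *+ size s = \sum_(i < size s) t by rewrite sumr_const card_ord.
  apply: ler_sum => i _; apply: ltW.
  by have := mem_nth 0 (ltn_ord i); rewrite mem_filter => /andP[].
have [s0|s_gt0] := posnP (size s).
  have -> : g = 0%N by move: g_le; rewrite s0 /c; lia.
  by rewrite mulr_ge0 ?powR_ge0.
have := le_powR_conj_of_mul_le p1 _ t0 (le_trans st (xs s s_adm)).
rewrite ler1n => /(_ s_gt0) sD; apply: le_trans (ler_wpM2l _ sD); rewrite // -natrM ler_nat.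
by move: g_le; rewrite /c; lia.
Qed.

Lemma conj_exponent_lt_gt0 (p : R) (N : nat) : 1 < p -> p / (p - 1) < N%:R -> (0 < N)%N.
Proof.
move=> p1 pN; rewrite -(ltr0n R) (lt_trans _ pN) // divr_gt0 ?subr_gt0 //.
exact: lt_trans p1.
Qed.

Lemma sum_pow_le_of_schreier (p D : R) (N : nat) :
  1 < p -> 0 < D -> p / (p - 1) < N%:R ->
  exists B, forall x : nat -> R, (forall j, 0 <= x j) ->
    (forall s, schreier_admissible s -> \sum_(j <- s) x j <= D * powR (size s)%:R p^-1) ->
    forall n, \sum_(j < n) x j ^+ N <= B.
Proof.
move=> p1 D0 qN; have N0 := conj_exponent_lt_gt0 p1 qN.
eexists => x x0 xs n; apply: (@sum_pow_le_of_count_gt _ x 2 D (p / (p - 1)) N N0) => //.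
- move=> j; rewrite x0 /=.
  have := xs [:: j]; rewrite big_seq1 /= powR1 mulr1; apply.
  by rewrite /schreier_admissible /=; lia.
- by move=> t m t0; exact: sum_gt_le_of_schreier.
Qed.

End SchreierCounting.

Section RealSequences.
Variable R : realType.

Lemma prod_le_sum_exprn (N : nat) (a : 'I_N -> R) : (0 < N)%N ->
  (forall i, 0 <= a i) -> \prod_i a i <= \sum_i a i ^+ N.
Proof.
move=> N0 a0; have sum0 : 0 <= \sum_i a i ^+ N by rewrite sumr_ge0 // => i _; rewrite exprn_ge0.
have := (@leif_AGM _ _ predT (fun i => a i ^+ N) (fun i _ => exprn_ge0 N (a0 i))).1.
rewrite card_ord prodrXl.
rewrite ler_pXn2r ?nnegrE ?prodr_ge0 ?divr_ge0 // => /le_trans; apply.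
by rewrite ler_pdivrMr ?ltr0n // ler_peMr // ler1n.
Qed.

Lemma leq_incr (m : nat -> nat) : (forall j, (m j < m j.+1)%N) -> forall j, (j <= m j)%N.
Proof. by move=> m_incr; elim=> // j IH; exact: leq_ltn_trans IH (m_incr j). Qed.

Lemma cvgn_subseq (T : ptopologicalType) (u : nat -> T) (l : T) (m : nat -> nat) :
  (forall j, (m j < m j.+1)%N) -> u @ \oo --> l -> (u \o m) @ \oo --> l.
Proof.
move=> m_incr; apply: cvg_comp => A [M _ MA]; exists M => // j /= Mj.
exact/MA/(leq_trans Mj (leq_incr m_incr j)).
Qed.

Lemma not_cvgn0_subseq (u : nat -> R) : (forall n, 0 <= u n) -> ~ (u @ \oo --> 0) ->
  exists2 e : R, 0 < e & exists2 m : nat -> nat,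
    (forall j, (m j < m j.+1)%N) & forall j, e <= u (m j).
Proof.
move=> u0 /cvgr0Pnorm_lt; rewrite -existsNP => -[e /not_implyP[e0 not_near]].
have far M : exists n, (M <= n)%N /\ e <= u n.
  apply: contrapT => noM; apply: not_near; exists M => // n /= Mn.
  by rewrite ger0_norm // ltNge; apply/negP => en; apply: noM; exists n.
have /choice[g gP] := far; exists e => //.
exists (fun j => iter j (fun k => g k.+1) (g 0%N)) => j; first by rewrite iterS (gP _).1.
by case: j => [|j]; rewrite ?iterS (gP _).2.
Qed.

Lemma cvgn0_root (u : nat -> R) (N : nat) : (0 < N)%N -> (forall n, 0 <= u n) ->
  (fun n => u n ^+ N) @ \oo --> 0 -> u @ \oo --> 0.
Proof.
move=> N0 u0 /cvgr0Pnorm_lt uN; apply/cvgr0Pnorm_lt => e e0.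
apply: filterS (uN _ (exprn_gt0 N e0)) => n.
by rewrite !ger0_norm ?exprn_ge0 // ltr_pXn2r ?nnegrE ?(ltW e0).
Qed.

End RealSequences.

Section SignedSums.
Variable R : realType.
Local Notation C := R[i].

Lemma Re_sign_mul (z : C) :
  complex.Re ((-1) ^+ (complex.Re z < 0)%R * z) = `|complex.Re z|.
Proof.
case: ltP => [z_lt0|z_ge0]; last by rewrite expr0 mul1r ger0_norm.
by rewrite expr1 mulN1r ltr0_norm //; case: z z_lt0.
Qed.

Lemma Im_sign_mul (z : C) :
  complex.Im ((-1) ^+ (complex.Im z < 0)%R * z) = `|complex.Im z|.
Proof.
case: ltP => [z_lt0|z_ge0]; last by rewrite expr0 mul1r ger0_norm.
by rewrite expr1 mulN1r ltr0_norm //; case: z z_lt0.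
Qed.

Lemma sum_cabs_le_signed_sums m (b : 'I_m -> C) :
  exists s1 s2 : {ffun 'I_m -> bool}, \sum_i cabs (b i) <=
    cabs (\sum_i (-1) ^+ s1 i * b i) + cabs (\sum_i (-1) ^+ s2 i * b i).
Proof.
exists [ffun i => complex.Re (b i) < 0], [ffun i => complex.Im (b i) < 0].
apply: le_trans (ler_sum _ (fun i _ => cabs_le_ReIm (b i))) _.
rewrite big_split /=; apply: lerD.
- apply: le_trans (ler_Re_cabs _); apply: le_trans (ler_norm _); rewrite Re_sum.
  by apply: ler_sum => i _; rewrite ffunE Re_sign_mul.
- apply: le_trans (ler_Im_cabs _); apply: le_trans (ler_norm _); rewrite Im_sum.
  by apply: ler_sum => i _; rewrite ffunE Im_sign_mul.
Qed.

End SignedSums.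

Section SpreadingModel.
Variable R : realType.
Local Notation C := R[i].
Variable V : completeNormedModType C.
Variables (f : nat -> V -> C) (L : (nat -> C) -> R).
Hypothesis f_dual : forall k, is_dual (f k).

Definition sign_seq m (s : {ffun 'I_m -> bool}) (i : nat) : C :=
  oapp (fun j => (-1) ^+ s j) 0 (insub i).

Lemma sign_seq_ord m (s : {ffun 'I_m -> bool}) (i : 'I_m) : sign_seq s i = (-1) ^+ s i.
Proof. by rewrite /sign_seq valK. Qed.

Lemma sign_seq_out m (s : {ffun 'I_m -> bool}) i : (m <= i)%N -> sign_seq s i = 0.
Proof. by move=> mi; rewrite /sign_seq insubN // -leqNgt. Qed.

Lemma spreading_model_block_bound (p : R) : 0 < p ->
  spreading_model f L -> sm_upper_est L p ->
  exists2 D : R, 0 < D & forall m, exists T : nat, forall kk : nat -> nat,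
    (T < kk 0)%N -> (forall i, (i.+1 < m)%N -> (kk i < kk i.+1)%N) ->
    forall u, rnorm u <= 1 -> \sum_(i < m) cabs (f (kk i) u) <= D * powR m%:R p^-1.
Proof.
move=> p0 [_ sm] [K hK].
have sign_bound m (s : {ffun 'I_m -> bool}) : exists k : nat, forall kk : nat -> nat,
    (k < kk 0)%N -> (forall i, (i.+1 < m)%N -> (kk i < kk i.+1)%N) ->
    forall u, rnorm u <= 1 ->
    cabs (\sum_(i < m) (-1) ^+ s i * f (kk i) u) <= `|K| * powR m%:R p^-1 + 1.
  have [k hk] := sm m (sign_seq s) (sign_seq_out s) 1 ltr01.
  exists k => kk kk0 kk_incr u u1.
  have Ls : L (sign_seq s) <= `|K| * powR m%:R p^-1.
    apply: le_trans (hK m _ (sign_seq_out s)) _.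
    under eq_bigr do rewrite sign_seq_ord cabs_sign powR1.
    by rewrite sumr_const card_ord ler_wpM2r ?powR_ge0 ?ler_norm.
  have := hk kk kk0 kk_incr; rewrite ltr_norml => /andP[_ dnorm_lt].
  under eq_bigr do rewrite -sign_seq_ord.
  have sum_dual := is_dual_sum (index_enum 'I_m) (sign_seq s) (fun i : 'I_m => f_dual (kk i)).
  have := dual_le_dnorm sum_dual u1; lra.
exists (2 * (`|K| + 1)); first by rewrite mulr_gt0 ?ltr_pwDr.
case=> [|m].
  exists 0%N => kk _ _ u _.
  by rewrite big_ord0 powR0 ?invr_neq0 ?gt_eqF // mulr0.
have /choice[k hk] := sign_bound m.+1.
exists (\max_s k s)%N => kk kk0 kk_incr u u1.
have hs s := hk s kk (leq_ltn_trans (leq_bigmax s) kk0) kk_incr u u1.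
have [s1 [s2 b_le]] := sum_cabs_le_signed_sums (fun i : 'I_m.+1 => f (kk i) u).
apply: le_trans b_le _.
have m1 : 1 <= powR m.+1%:R p^-1.
  by rewrite -[leLHS](powRr0 m.+1%:R); apply: ler_powR; rewrite ?ler1n // invr_ge0 ltW.
apply: le_trans (lerD (hs s1) (hs s2)) _.
by lra.
Qed.

End SpreadingModel.

Lemma exists_schreier_diagonal (T : nat -> nat) :
  exists2 phi : nat -> nat, (forall j, (phi j < phi j.+1)%N) &
    forall j m, (m <= (2 * j).+2)%N -> (T m < phi j)%N.
Proof.
exists (fun j => j.+1 + \sum_(m < (2 * j).+3) T m)%N => [j|j m m_le].
  have -> : ((2 * j.+1).+3 = ((2 * j).+3).+2)%N by lia.
  rewrite -addSn leq_add2l [in X in (_ <= X)%N]big_ord_recr [in X in (_ <= X)%N]big_ord_recr.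
  by rewrite /= -addnA leq_addr.
rewrite (bigD1 (Ordinal (m_le : (m < (2 * j).+3)%N))) //=.
by rewrite addSn ltnS addnCA leq_addr.
Qed.

Section SchreierDiagonal.
Variable R : realType.
Local Notation C := R[i].
Variable V : completeNormedModType C.

Lemma schreier_sum_le (f : nat -> V -> C) (p D : R) (T phi : nat -> nat) :
  (forall m (kk : nat -> nat), (T m < kk 0)%N ->
    (forall i, (i.+1 < m)%N -> (kk i < kk i.+1)%N) ->
    forall u, rnorm u <= 1 -> \sum_(i < m) cabs (f (kk i) u) <= D * powR m%:R p^-1) ->
  (forall j, (phi j < phi j.+1)%N) -> (forall j m, (m <= (2 * j).+2)%N -> (T m < phi j)%N) ->
  forall u, rnorm u <= 1 -> forall s, schreier_admissible s ->
  \sum_(j <- s) cabs (f (phi j) u) <= D * powR (size s)%:R p^-1.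
Proof.
move=> block phi_incr phi_T u u1 s /andP[s_sorted s_small].
rewrite (big_nth 0) big_mkord.
apply: (block _ (fun i => phi (nth 0 s i)) _ _ u u1) => [|i i_lt].
  by apply: phi_T; case: s s_small {s_sorted} => //= j s /andP[].
apply: (homo_ltn ltn_trans phi_incr); apply: (sorted_ltn_nth ltn_trans 0 s_sorted) => //.
by rewrite inE (ltn_trans _ i_lt).
Qed.

Lemma spreading_model_sum_pow_bound (f : nat -> V -> C) L (p : R) (N : nat) :
  1 < p -> p / (p - 1) < N%:R -> (forall k, is_dual (f k)) ->
  spreading_model f L -> sm_upper_est L p ->
  exists2 phi : nat -> nat, (forall j, (phi j < phi j.+1)%N) &
    exists B, forall u n, rnorm u <= 1 -> \sum_(j < n) cabs (f (phi j) u) ^+ N <= B.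
Proof.
move=> p1 pN f_dual f_sm f_est.
have [D D0 block] := spreading_model_block_bound f_dual (lt_trans ltr01 p1) f_sm f_est.
have /choice[T hT] := block.
have [phi phi_incr phi_T] := exists_schreier_diagonal T.
have [B hB] := sum_pow_le_of_schreier p1 D0 pN.
exists phi => //; exists B => u n u1.
apply: (hB (fun j => cabs (f (phi j) u))) => [j|]; first exact: cabs_ge0.
exact: schreier_sum_le hT phi_incr phi_T u u1.
Qed.

End SchreierDiagonal.

Section Multilinear.
Variable R : realType.
Local Notation C := R[i].
Variable V : completeNormedModType C.

Lemma prod_upd N (F : 'I_N -> V -> C) (x : 'I_N -> V) i v :
  \prod_k F k (upd x i v k) = F i v * \prod_(k | k != i) F k (x k).
Proof.
rewrite (bigD1 i) //= /upd eqxx; congr (_ * _).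
by apply: eq_bigr => k /negbTE ->.
Qed.

Lemma prod_dual_multilinear N (F : 'I_N -> V -> C) :
  (forall i, is_dual (F i)) -> is_bdd_multilinear (fun x => \prod_i F i (x i)).
Proof.
move=> F_dual; split=> [x i a v w|].
  by rewrite !prod_upd (F_dual i).1 mulrDl mulrA.
have /choice[M M_bound] := fun i => dual_bounded (F_dual i).
exists (\prod_i M i) => x; rewrite cabs_prod -big_split /=.
by apply: ler_prod => i _; rewrite cabs_ge0 (M_bound i).2.
Qed.

Lemma dual_pow_hom_poly (g : V -> C) N : is_dual g -> is_hom_poly N (fun z => g z ^+ N).
Proof.
move=> g_dual; exists (fun x => \prod_(i < N) g (x i)); split.
  exact: (prod_dual_multilinear (F := fun _ : 'I_N => g) (fun _ => g_dual)).
by move=> z; rewrite prodr_const card_ord.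
Qed.

Section SeriesForm.
Variables (g : nat -> V -> C) (N : nat).

Definition series_form (x : 'I_N -> V) : C := csum (fun j => \prod_(i < N) g j (x i)).

Variable B : R.
Hypothesis g_dual : forall j, is_dual (g j).
Hypothesis N_gt0 : (0 < N)%N.
Hypothesis gB : forall u n, rnorm u <= 1 -> \sum_(j < n) cabs (g j u) ^+ N <= B.

Lemma sum_cabs_prod_le (x : 'I_N -> V) n :
  \sum_(j < n) cabs (\prod_(i < N) g j (x i)) <= N%:R * B * \prod_(i < N) rnorm (x i).
Proof.
have [[i0 x0]|x_ne0] := pselect (exists i, rnorm (x i) = 0).
  rewrite (bigD1 i0) //= x0 mul0r mulr0 big1 // => j _.
  by rewrite cabs_prod (bigD1 i0) //= (rnorm_eq0 x0) dual0 // cabs0 mul0r.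
have x_gt0 i : 0 < rnorm (x i).
  by rewrite lt_neqAle rnorm_ge0 andbT eq_sym; apply/eqP => xi0; apply: x_ne0; exists i.
pose u i := (rnorm (x i))^-1%:C *: x i.
have prodE j : cabs (\prod_i g j (x i)) = \prod_i rnorm (x i) * \prod_i cabs (g j (u i)).
  rewrite cabs_prod -big_split /=; apply: eq_bigr => i _.
  by rewrite -{1}(normalizeK (x_gt0 i)) dualZ // cabsM cabsR gtr0_norm.
under eq_bigr do rewrite prodE.
rewrite -mulr_sumr mulrC ler_wpM2r //; first by apply: prodr_ge0 => i _; exact: rnorm_ge0.
apply: le_trans (ler_sum _ (fun j _ => prod_le_sum_exprn N_gt0 (fun i => cabs_ge0 _))) _.
rewrite exchange_big /= mulr_natl -[X in _ *+ X](card_ord N) -sumr_const.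
by apply: ler_sum => i _; apply: gB; rewrite rnorm_normalize.
Qed.

Lemma series_form_multilinear : is_bdd_multilinear series_form.
Proof.
split=> [x i a v w|]; last by exists (N%:R * B) => x; exact: csum_le (sum_cabs_prod_le x).
rewrite /series_form -(csum_linear _ (sum_cabs_prod_le _) (sum_cabs_prod_le _)).
congr csum; apply: funext => j; rewrite !(prod_upd (fun _ => g j)) (g_dual j).1; ring.
Qed.

Lemma series_form_diag (z : V) (c : C) j0 :
  (forall j, g j z = (j == j0)%:R * c) -> series_form (fun _ => z) = c ^+ N.
Proof.
move=> gz; rewrite /series_form (csum_delta (j0 := j0)) => [|j j_ne].
  by rewrite prodr_const card_ord gz eqxx mul1r.
by rewrite prodr_const gz (negbTE j_ne) mul0r card_ord expr0n gtn_eqF.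
Qed.

End SeriesForm.

End Multilinear.

Section Schur.
Variable R : realType.
Local Notation C := R[i].
Variable V : completeNormedModType C.

Definition norming_poly N (y : nat -> V) : Prop :=
  exists2 P : V -> C, is_hom_poly N P & exists2 s : nat -> nat,
    (forall j, (s j < s j.+1)%N) & forall j (c : C), P (c *: y (s j)) = c ^+ N.

Lemma good_dual_seq_norming_poly (y : nat -> V) (p : R) (N : nat) :
  1 < p -> p / (p - 1) < N%:R -> good_dual_seq y p -> norming_poly N y.
Proof.
move=> p1 pN [nk [nk_incr [f [f_dual [f_bio [L [f_sm [_ f_est]]]]]]]].
have N_gt0 := conj_exponent_lt_gt0 p1 pN.
have [phi phi_incr [B gB]] := spreading_model_sum_pow_bound p1 pN f_dual f_sm f_est.
have phi_inj : injective phi := incn_inj (leq_mono (homo_ltn ltn_trans phi_incr)).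
exists (fun z => series_form (f \o phi) (fun _ : 'I_N => z)).
  exists (series_form (N := N) (f \o phi)); split => //.
  exact: (series_form_multilinear (fun j => f_dual (phi j)) N_gt0 gB).
exists (nk \o phi) => [j|j c]; first exact: (homo_ltn ltn_trans nk_incr (phi_incr j)).
apply: (series_form_diag N_gt0) => k /=.
by rewrite dualZ // f_bio (inj_eq phi_inj) mulrC.
Qed.

Lemma schur_of_norming_poly (x : nat -> V) (Q : nat -> Prop) :
  (forall g, is_dual g -> (fun n => cabs (g (x n))) @ \oo --> 0) ->
  (forall y, normalized y -> weakly_null y -> exists2 N, Q N & norming_poly N y) ->
  (forall N P, Q N -> is_hom_poly N P -> (fun n => cabs (P (x n))) @ \oo --> 0) ->
  (fun n => rnorm (x n)) @ \oo --> 0.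
Proof.
move=> x_weak norming x_poly; apply: contrapT.
move=> /(not_cvgn0_subseq (fun n => rnorm_ge0 (x n)))[e e0 [m m_incr e_le]].
have xm_gt0 j : 0 < rnorm (x (m j)) := lt_le_trans e0 (e_le j).
pose y j := (rnorm (x (m j)))^-1%:C *: x (m j).
have [N QN [P P_hom [s s_incr Ps]]] : exists2 N, Q N & norming_poly N y.
  apply: norming => [j|g g_dual]; first exact: rnorm_normalize.
  apply: (@squeeze_cvgr _ _ _ _ (fun=> 0) (fun j => e^-1 * cabs (g (x (m j))))).
  - apply: nearW => j; rewrite cabs_ge0 /= dualZ // cabsM cabsR ger0_norm ?invr_ge0 ?rnorm_ge0 //.
    by rewrite ler_wpM2r ?cabs_ge0 // lef_pV2 ?posrE.
  - exact: cvg_cst.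
  - by rewrite -(mulr0 e^-1); apply: cvgMr; exact: cvgn_subseq m_incr (x_weak g g_dual).
have ms_incr j : (m (s j) < m (s j.+1))%N := homo_ltn ltn_trans m_incr (s_incr j).
have P_lim := cvgn_subseq ms_incr (x_poly N P QN P_hom).
have : e ^+ N <= 0.
  rewrite -(cvg_lim _ P_lim) //; apply: limr_ge; first by apply/cvg_ex; eexists; exact: P_lim.
  apply: nearW => j /=; rewrite -[x _](normalizeK (xm_gt0 (s j))) Ps.
  by rewrite cabsX cabsR ger0_norm ?rnorm_ge0 // lerXn2r ?nnegrE ?rnorm_ge0 ?(ltW e0).
by rewrite leNgt exprn_gt0.
Qed.

End Schur.

Theorem theorem3p3 (R : realType) (V : completeNormedModType R[i]) :
  ((forall y : nat -> V, normalized y -> weakly_null y ->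
      exists p : R, 1 < p /\ good_dual_seq y p) ->
   P_Schur V) /\
  (forall p : R, 1 < p ->
    (forall y : nat -> V, normalized y -> weakly_null y -> good_dual_seq y p) ->
    forall N : nat, p / (p - 1) < N%:R -> PN_Schur V N).
Proof.
split=> [good x x_poly|p p1 good N pN x x_poly].
- apply: (@schur_of_norming_poly _ _ x (leq 1)) => [g g_dual|y y_norm y_weak|M P M1].
  + under eq_fun do rewrite -[g _]expr1.
    exact: x_poly (dual_pow_hom_poly 1 g_dual).
  + have [p [p1 y_good]] := good y y_norm y_weak.
    exists (Num.trunc (p / (p - 1))).+1 => //.
    exact: good_dual_seq_norming_poly p1 (truncnS_gt _) y_good.
  + exact: x_poly.
- apply: (@schur_of_norming_poly _ _ x (eq^~ N)) => [g g_dual|y y_norm y_weak|M P ->].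
  + apply: (cvgn0_root (conj_exponent_lt_gt0 p1 pN)) => [n|]; first exact: cabs_ge0.
    under eq_fun do rewrite -cabsX.
    exact: x_poly (dual_pow_hom_poly N g_dual).
  + by exists N => //; exact: good_dual_seq_norming_poly p1 pN (good y y_norm y_weak).
  + exact: x_poly.
Qed.
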